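(* For every maximal consistent set $X$ (relative to the axiom system of $\mathbb{PCL}$), the relation $\le_X$ on formulas, defined by $A\le_X B$ iff $(A\lor B)>A\in X$, is reflexive and transitive.
   Context: Formulas $\mathcal{L}::=p\mid\bot\mid A\wedge B\mid A\lor B\mid A\to B\mid A>B$. The axiom system of $\mathbb{PCL}$: classical propositional logic, rules (RCEA) from $A\leftrightarrow B$ infer $(A>C)\leftrightarrow(B>C)$, (RCK) from $A\to B$ infer $(C>A)\to(C>B)$, axioms (ID) $A>A$, (R-And) $(A>B)\wedge(A>C)\to(A>(B\wedge C))$, (CM) $(A>B)\wedge(A>C)\to((A\wedge B)>C)$, (OR) $(A>C)\wedge(B>C)\to((A\lor B)>C)$. Maximal consistent sets are the usual ones relative to this axiom system. *)

From Stdlib Require Import List.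
Import ListNotations.

Inductive form : Type :=
| Var : nat -> form
| Bot : form
| And : form -> form -> form
| Or  : form -> form -> form
| Imp : form -> form -> form
| Cond : form -> form -> form.

Definition Iff (A B : form) : form := And (Imp A B) (Imp B A).

(* Classical truth-functional evaluation: variables and conditional formulas
   A > B are treated as propositional atoms, valued by [v]. *)
Fixpoint teval (v : form -> bool) (A : form) : bool :=
  match A with
  | Var n => v (Var n)
  | Bot => false
  | And B C => andb (teval v B) (teval v C)
  | Or B C => orb (teval v B) (teval v C)
  | Imp B C => orb (negb (teval v B)) (teval v C)
  | Cond B C => v (Cond B C)
  end.

Definition tautology (A : form) : Prop := forall v, teval v A = true.

Inductive PCL : form -> Prop :=
| pcl_taut : forall A, tautology A -> PCL A
| pcl_mp : forall A B, PCL (Imp A B) -> PCL A -> PCL B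
| pcl_RCEA : forall A B C, PCL (Iff A B) -> PCL (Iff (Cond A C) (Cond B C))
| pcl_RCK : forall A B C, PCL (Imp A B) -> PCL (Imp (Cond C A) (Cond C B))
| pcl_ID : forall A, PCL (Cond A A)
| pcl_RAnd : forall A B C,
    PCL (Imp (And (Cond A B) (Cond A C)) (Cond A (And B C)))
| pcl_CM : forall A B C,
    PCL (Imp (And (Cond A B) (Cond A C)) (Cond (And A B) C))
| pcl_OR : forall A B C,
    PCL (Imp (And (Cond A C) (Cond B C)) (Cond (Or A B) C)).

Definition Top : form := Imp Bot Bot.

Fixpoint conj_list (l : list form) : form :=
  match l with
  | [] => Top
  | A :: l' => And A (conj_list l')
  end.

Definition derives (X : form -> Prop) (A : form) : Prop :=
  exists l : list form, (forall B, In B l -> X B) /\ PCL (Imp (conj_list l) A).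

Definition consistent (X : form -> Prop) : Prop := ~ derives X Bot.

Definition maximal_consistent (X : form -> Prop) : Prop :=
  consistent X /\
  forall Y : form -> Prop, (forall A, X A -> Y A) -> consistent Y ->
    forall A, Y A -> X A.

Definition leX (X : form -> Prop) (A B : form) : Prop := X (Cond (Or A B) A).

(* A maximal consistent set contains every theorem of PCL and is closed under
   modus ponens, so the rules of PCL hold inside it as closure properties.
   Reflexivity of <=_X is ID transported along A <-> A \/ A.  For
   transitivity put D := A \/ B \/ C: weakening the consequents of
   (A \/ B) > A and (B \/ C) > B to A \/ B and applying OR gives
   D > A \/ B; since (A \/ B) > A and D /\ (A \/ B) <-> A \/ B, the
   derived rule Cut yields D > A, hence D > A \/ C, and cautious monotonicity
   gives D /\ (A \/ C) > A, i.e. (A \/ C) > A. *)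
From Stdlib Require Import List.
Import ListNotations.

Ltac taut := apply pcl_taut; intro v; simpl;
  repeat match goal with
  | |- context [teval ?w ?x] => destruct (teval w x)
  | |- context [?w (Cond ?a ?b)] => destruct (w (Cond a b))
  end; reflexivity.

Lemma pcl_mp2 A B C : PCL (Imp A (Imp B C)) -> PCL A -> PCL B -> PCL C.
Proof. intros HABC HA HB. exact (pcl_mp _ _ (pcl_mp _ _ HABC HA) HB). Qed.

Lemma conj_list_app l1 l2 :
  PCL (Imp (conj_list (l1 ++ l2)) (And (conj_list l1) (conj_list l2))).
Proof.
  induction l1 as [|A l1 IH]; simpl.
  - taut.
  - eapply pcl_mp; [|exact IH].
    set (x := conj_list (l1 ++ l2)); set (y := conj_list l1); set (z := conj_list l2).
    taut.
Qed.

Section Derivability.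
Variable X : form -> Prop.

Lemma derives_mem A : X A -> derives X A.
Proof.
  intros HA. exists [A]. split.
  - intros B [<-|[]]; exact HA.
  - simpl. taut.
Qed.

Lemma derives_imp A B : derives X A -> PCL (Imp A B) -> derives X B.
Proof.
  intros [l [Hl HlA]] HAB. exists l. split; [exact Hl|].
  eapply pcl_mp2; [|exact HlA|exact HAB].
  set (x := conj_list l). taut.
Qed.

Lemma derives_and A B : derives X A -> derives X B -> derives X (And A B).
Proof.
  intros [l1 [Hl1 H1]] [l2 [Hl2 H2]]. exists (l1 ++ l2). split.
  - intros C HC. apply in_app_or in HC as [HC|HC]; auto.
  - eapply pcl_mp; [|exact (conj_list_app l1 l2)].
    eapply pcl_mp2; [|exact H1|exact H2].
    set (x := conj_list (l1 ++ l2)); set (y := conj_list l1); set (z := conj_list l2).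
    taut.
Qed.

Lemma derives_conj_list l :
  (forall B, In B l -> derives X B) -> derives X (conj_list l).
Proof.
  induction l as [|A l IH]; intros Hl; simpl.
  - exists []. split; [intros B []|]. taut.
  - apply derives_and; [apply Hl; left; reflexivity|].
    apply IH. intros B HB. apply Hl. right. exact HB.
Qed.

Lemma maximal_consistent_derives A : maximal_consistent X -> derives X A -> X A.
Proof.
  intros [Hcons Hmax] HA.
  apply (Hmax (fun B => X B \/ B = A)); [auto| |auto].
  intros [l [Hl HlBot]]. apply Hcons.
  apply (derives_imp (conj_list l)); [|exact HlBot].
  apply derives_conj_list. intros B HB.
  destruct (Hl B HB) as [HXB| ->]; [apply derives_mem|]; assumption.
Qed.

End Derivability.

Section MaximalConsistent.
Variable X : form -> Prop.
Hypothesis HX : maximal_consistent X.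

Lemma mc_imp A B : PCL (Imp A B) -> X A -> X B.
Proof.
  intros HAB HA. apply maximal_consistent_derives; [exact HX|].
  apply (derives_imp X A); [apply derives_mem|]; assumption.
Qed.

Lemma mc_imp2 A B C : PCL (Imp (And A B) C) -> X A -> X B -> X C.
Proof.
  intros HABC HA HB. apply maximal_consistent_derives; [exact HX|].
  apply (derives_imp X (And A B)); [|exact HABC].
  apply derives_and; apply derives_mem; assumption.
Qed.

Lemma mc_thm A : PCL A -> X A.
Proof.
  intros HA. apply maximal_consistent_derives; [exact HX|].
  exists []. split; [intros B []|].
  eapply pcl_mp; [|exact HA]. simpl. taut.
Qed.

Lemma mc_RCEA A B C : PCL (Iff A B) -> X (Cond A C) -> X (Cond B C).
Proof.
  intros HAB. apply mc_imp.
  eapply pcl_mp; [|exact (pcl_RCEA _ _ C HAB)]. taut.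
Qed.

Lemma mc_RCK A B C : PCL (Imp A B) -> X (Cond C A) -> X (Cond C B).
Proof. intros HAB. apply mc_imp, pcl_RCK, HAB. Qed.

Lemma mc_ID A : X (Cond A A).
Proof. apply mc_thm, pcl_ID. Qed.

Lemma mc_RAnd A B C : X (Cond A B) -> X (Cond A C) -> X (Cond A (And B C)).
Proof. apply mc_imp2, pcl_RAnd. Qed.

Lemma mc_CM A B C : X (Cond A B) -> X (Cond A C) -> X (Cond (And A B) C).
Proof. apply mc_imp2, pcl_CM. Qed.

Lemma mc_OR A B C : X (Cond A C) -> X (Cond B C) -> X (Cond (Or A B) C).
Proof. apply mc_imp2, pcl_OR. Qed.

(* Cut is derivable: split [D] into [D /\ E] and [D /\ ~E]; both conditionally
   entail [E -> A] (the second by ID), and R-And with [D > E] concludes. *)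
Lemma mc_cut D E A : X (Cond D E) -> X (Cond (And D E) A) -> X (Cond D A).
Proof.
  intros HDE HDEA.
  set (N := And D (Imp E Bot)).
  assert (HDE_EA : X (Cond (And D E) (Imp E A))) by (apply (mc_RCK A); [taut|exact HDEA]).
  assert (HN_EA : X (Cond N (Imp E A))) by (apply (mc_RCK N); [unfold N; taut|apply mc_ID]).
  assert (HD_EA : X (Cond D (Imp E A))).
  { apply (mc_RCEA (Or (And D E) N)); [unfold N; taut|].
    apply mc_OR; assumption. }
  apply (mc_RCK (And E (Imp E A))); [taut|].
  apply mc_RAnd; assumption.
Qed.

Lemma leX_refl A : leX X A A.
Proof. apply (mc_RCEA A); [taut|apply mc_ID]. Qed.

Lemma leX_trans A B C : leX X A B -> leX X B C -> leX X A C.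
Proof.
  unfold leX. intros HAB HBC.
  set (D := Or A (Or B C)).
  assert (HD_AB : X (Cond D (Or A B))).
  { apply (mc_RCEA (Or (Or A B) (Or B C))); [unfold D; taut|].
    apply mc_OR.
    - apply (mc_RCK A); [taut|exact HAB].
    - apply (mc_RCK B); [taut|exact HBC]. }
  assert (HD_A : X (Cond D A)).
  { apply (mc_cut D (Or A B)); [exact HD_AB|].
    apply (mc_RCEA (Or A B)); [unfold D; taut|exact HAB]. }
  assert (HD_AC : X (Cond D (Or A C))) by (apply (mc_RCK A); [taut|exact HD_A]).
  apply (mc_RCEA (And D (Or A C))); [unfold D; taut|].
  apply mc_CM; assumption.
Qed.

End MaximalConsistent.

Theorem mainTheorem5 :
  forall X : form -> Prop, maximal_consistent X ->
    (forall A, leX X A A) /\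
    (forall A B C, leX X A B -> leX X B C -> leX X A C).
Proof.
  intros X HX. split.
  - exact (leX_refl X HX).
  - exact (leX_trans X HX).
Qed.
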